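(* Let $\alpha=(\alpha_1,\ldots,\alpha_n)$ be a composition, $\sigma\in S_n$, and $i\in\{1,\ldots,n-1\}$ with $\alpha_i=\alpha_{i+1}$. Then for every $T\in\mathrm{NAF}(\alpha,\sigma)$, $$\sum_{U\in\mathrm{F}(\alpha,\sigma s_i)}P_i(T,U)=1.$$
   Context: Permutations are in one-line notation; $\sigma s_i$ is $\sigma$ with the entries in positions $i,i+1$ exchanged. A composition is a sequence of nonnegative integers. The skyline diagram is $\mathrm{dg}(\alpha)=\{(j,r):1\le j\le n,\ 1\le r\le\alpha_j\}$ ($j$ = column, $r$ = row) and the augmented diagram is $\mathrm{adg}(\alpha)=\mathrm{dg}(\alpha)\cup\{(j,0):1\le j\le n\}$ (row $0$ is the basement). For $u=(j,r)\in\mathrm{dg}(\alpha)$: $\mathrm{leg}(u)=\alpha_j-r$; the left arm set is $\{(j',r-1)\in\mathrm{adg}(\alpha):j'<j,\ \alpha_{j'}<\alpha_j\}$, the right arm set is $\{(j',r)\in\mathrm{dg}(\alpha):j'>j,\ \alpha_{j'}\le\alpha_j\}$, $\mathrm{Arm}(u)$ is their union and $\mathrm{arm}(u)=|\mathrm{Arm}(u)|$. Two boxes of $\mathrm{adg}(\alpha)$ attack each other if they are in the same row, or in consecutive rows with the box in the higher row strictly to the right of the box in the lower row. A filling of shape $\alpha$ and basement $\tau\in S_n$ is a map $T:\mathrm{adg}(\alpha)\to\{1,\ldots,n\}$ with $T(j,0)=\tau_j$; $\mathrm{F}(\alpha,\tau)$ is the set of these, and $\mathrm{NAF}(\alpha,\tau)$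 the subset of non-attacking ones (attacking boxes have distinct entries). For integers $a,b$ let $\chi(a,b)=1$ if $a>b$ and $0$ otherwise, and $\chi(a,b,c)=\chi(a,b)+\chi(b,c)-\chi(a,c)$. Fix $i$ with $\alpha_i=\alpha_{i+1}$. For a filling $T$ and $0\le r\le\alpha_i$, $\mathrm{swap}_r(T)$ exchanges the entries of boxes $(i,r)$ and $(i+1,r)$, and $\Omega_{0,h}=\mathrm{swap}_h\circ\cdots\circ\mathrm{swap}_0$. For $T\in\mathrm{NAF}(\alpha,\tau)$ and $0\le r\le\alpha_i-1$, let $a=T(i,r)$, $b=T(i+1,r)$, $c=T(i,r+1)$, $d=T(i+1,r+1)$, $A=\mathrm{arm}(i+1,r+1)$, $\ell=\mathrm{leg}(i+1,r+1)$, and define $\rho_r(T)\in\mathbb{Q}(q,t)$: if $a,b,c,d$ are distinct, $\rho_r(T)=0$ when $\chi(c,d,a)=\chi(c,d,b)$ and $\rho_r(T)=1$ when $\chi(c,d,a)=\chi(d,c,b)$; if exactly three of them are distinct, then $\rho_r(T)=0$ if $b=c$, $\rho_r(T)=1$ if $b=d$, and $\rho_r(T)=t^{1-\chi(d,a,b)}\frac{1-q^{\ell+1}t^{A+1}}{1-q^{\ell+1}t^{A+2}}$ if $a=c$; if $a=c$ and $b=d$, $\rho_r(T)=1$. Also set $\rho_{\alpha_i}(T)=0$. For $T\in\mathrm{NAF}(\alpha,\tau)$ and $U\in\mathrm{F}(\alpha,\tau s_i)$, $P_i(T,U)=\left(\prod_{r=0}^{h-1}\rho_r(T)\right)(1-\rho_h(T))$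 if $U=\Omega_{0,h}(T)$ for some $h\in\{0,\ldots,\alpha_i\}$, and $P_i(T,U)=0$ otherwise. *)

From HB Require Import structures.
From mathcomp Require Import all_boot all_order all_algebra all_fingroup.
From mathcomp Require Import fraction.
Set Implicit Arguments. Unset Strict Implicit. Unset Printing Implicit Defensive.
Import Order.TTheory GRing.Theory Num.Theory.
Local Open Scope ring_scope.

(* Conventions (0-indexed): columns j = 0..n-1 (paper column j+1), rows
   r = 0..alpha_j (row 0 = basement), entries in 'I_n (paper value v+1).
   Only the relative order of entries matters (chi), so the shift is harmless. *)

Definition Kqt := {fraction {poly {poly rat}}}.
Definition qv : Kqt := tofrac (('X : {poly rat})%:P).
Definition tv : Kqt := tofrac ('X : {poly {poly rat}}).

Section Fillings.
Variables (n : nat) (alpha : n.-tuple nat).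

Definition al (j : nat) : nat := nth 0%N alpha j.
Definition maxpart : nat := \max_(x <- alpha) x.

Definition cell := {c : 'I_n * 'I_maxpart.+1 | (c.2 <= al c.1)%N}.

Definition filling := {ffun cell -> 'I_n}.

Definition lookup (T : filling) (j r : nat) : option 'I_n :=
  match @insub _ (fun k => (k < n)%N) 'I_n j,
        @insub _ (fun k => (k < maxpart.+1)%N) 'I_maxpart.+1 r with
  | Some j', Some r' =>
      omap T (@insub _ (fun c : 'I_n * 'I_maxpart.+1 => (c.2 <= al c.1)%N) cell (j', r'))
  | _, _ => None
  end.

Definition ent (T : filling) (j r : nat) : nat := odflt 0%N (omap val (lookup T j r)).

Definition F (tau : 'S_n) : {set filling} :=
  [set T : filling | [forall j : 'I_n, lookup T j 0 == Some (tau j)]].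

Definition attack (c1 c2 : cell) : bool :=
  let: (j1, r1) := val c1 in let: (j2, r2) := val c2 in
  [|| (r1 : nat) == r2,
      ((r2 : nat) == r1.+1) && (j1 < j2)%N
    | ((r1 : nat) == r2.+1) && (j2 < j1)%N].

Definition NAF (tau : 'S_n) : {set filling} :=
  [set T in F tau | [forall c1, forall c2,
      ((c1 != c2) && attack c1 c2) ==> (T c1 != T c2)]].

Definition leg (j r : nat) : nat := (al j - r)%N.
Definition arm (j r : nat) : nat :=
  (count (fun j' => [&& (j' < j)%N, (al j' < al j)%N & (r.-1 <= al j')%N]) (iota 0 n)
 + count (fun j' => [&& (j < j')%N, (al j' <= al j)%N, (1 <= r)%N & (r <= al j')%N])
         (iota 0 n))%N.

Definition chi (a b : nat) : int := if (b < a)%N then 1 else 0.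
Definition chi3 (a b c : nat) : int := chi a b + chi b c - chi a c.

Variable i : nat.

Definition Omega (h : nat) (T : filling) : filling :=
  [ffun c : cell =>
     let: (j, r) := val c in
     if ((r : nat) <= h)%N && ((j : nat) == i) then odflt (T c) (lookup T i.+1 r)
     else if ((r : nat) <= h)%N && ((j : nat) == i.+1) then odflt (T c) (lookup T i r)
     else T c].

Definition rho (T : filling) (r : nat) : Kqt :=
  if (r < al i)%N then
    let a := ent T i r in let b := ent T i.+1 r in
    let c := ent T i r.+1 in let d := ent T i.+1 r.+1 in
    let A := arm i.+1 r.+1 in let l := leg i.+1 r.+1 in
    let nd := size (undup [:: a; b; c; d]) in
    if nd == 4%N then
      (if chi3 c d a == chi3 c d b then 0
       else if chi3 c d a == chi3 d c b then 1 else 0)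
    else if (nd == 3%N) && (b == c) then 0
    else if (nd == 3%N) && (b == d) then 1
    else if (nd == 3%N) && (a == c) then
      tv ^ (1 - chi3 d a b) *
        ((1 - qv ^+ l.+1 * tv ^+ A.+1) / (1 - qv ^+ l.+1 * tv ^+ A.+2))
    else if (a == c) && (b == d) then 1
    else 0
  else 0.

Definition Pi (T U : filling) : Kqt :=
  match [pick h : 'I_(al i).+1 | U == Omega h T] with
  | Some h => (\prod_(r < h) rho T r) * (1 - rho T h)
  | None => 0
  end.

End Fillings.

(* The fillings Omega_{0,h}(T), 0 <= h <= alpha_i, lie in F(alpha, sigma s_i) and are pairwise
   distinct: the boxes (i,h') and (i+1,h') attack each other, so T differs on them and swapping
   row h' is visible.  Hence P_i(T, -) is supported on these fillings, and its total mass
   telescopes to 1 - prod_{r <= alpha_i} rho_r(T), which is 1 because rho_{alpha_i}(T) = 0. *)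
From HB Require Import structures.
From mathcomp Require Import all_boot all_order all_algebra all_fingroup.
From mathcomp Require Import fraction.
Set Implicit Arguments. Unset Strict Implicit. Unset Printing Implicit Defensive.
Import GRing.Theory.
Local Open Scope ring_scope.

Lemma sum_prod_telescope (R : comPzRingType) (f : nat -> R) (m : nat) :
  \sum_(h < m.+1) (\prod_(r < h) f r) * (1 - f h) = 1 - \prod_(r < m.+1) f r.
Proof.
elim: m => [|m IH]; first by rewrite big_ord1 big_ord0 big_ord1 mul1r.
by rewrite big_ord_recr /= IH [in RHS]big_ord_recr /= mulrBr mulr1 addrA subrK.
Qed.

Section SwapColumns.
Variables (n : nat) (alpha : n.-tuple nat) (i : 'I_n).
Hypothesis Hi : (i.+1 < n)%N.

Lemma lookup_cell (T : filling alpha) (c : cell alpha) :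
  lookup T (val c).1 (val c).2 = Some (T c).
Proof.
case: c => [[j r] Hc] /=.
by rewrite /lookup (valK j) (valK r) /= (valK (exist _ (j, r) Hc : cell alpha)).
Qed.

Lemma al_le_maxpart (j : 'I_n) : (al alpha j <= maxpart alpha)%N.
Proof.
apply: (@leq_bigmax_seq _ _ _ id) => //.
by apply: mem_nth; rewrite size_tuple.
Qed.

Lemma Omega_in_F (sigma : 'S_n) (T : filling alpha) (h : nat) :
  T \in F alpha sigma -> Omega i h T \in F alpha (tperm i (Ordinal Hi) * sigma)%g.
Proof.
rewrite !inE => /forallP basement; apply/forallP => j.
pose c0 (k : 'I_n) : cell alpha := exist _ (k, ord0) (leq0n _).
have lookup0 (U : filling alpha) (k : 'I_n) : lookup U k 0 = Some (U (c0 k)).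
  exact: (lookup_cell U (c0 k)).
have /eqP basement_i := basement i.
have /eqP basement_i' := basement (Ordinal Hi).
rewrite lookup0 ffunE /= permM.
have [->|ji] := eqVneq j i; first by rewrite /= eqxx tpermL basement_i'.
have [->|ji'] := eqVneq j (Ordinal Hi); first by rewrite /= gtn_eqF // eqxx tpermR basement_i.
have /negbTE -> : val j != val i := ji.
have /negbTE -> : val j != i.+1 := ji'.
by rewrite -lookup0 tpermD ?basement // eq_sym.
Qed.

Hypothesis Heq : al alpha i = al alpha i.+1.

Lemma Omega_inj (sigma : 'S_n) (T : filling alpha) :
  T \in NAF alpha sigma -> injective (fun h : 'I_(al alpha i).+1 => Omega i h T).
Proof.
rewrite inE => /andP [_ /forallP nonattacking].
suff Omega_lt_neq (h h' : 'I_(al alpha i).+1) :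
    (h < h')%N -> Omega i h T <> Omega i h' T.
  move=> h h' E; case: (ltngtP h h') => [/Omega_lt_neq|/Omega_lt_neq|/val_inj] //.
  by move=> /(_ (esym E)).
move=> lt_hh' E.
have le_h' : (h' <= al alpha i)%N by rewrite -ltnS.
have lt_h'_max : (h' < (maxpart alpha).+1)%N.
  by rewrite ltnS (leq_trans le_h' (al_le_maxpart i)).
pose c : cell alpha := exist _ (i, Ordinal lt_h'_max) le_h'.
have le_h'_next : (h' <= al alpha i.+1)%N by rewrite -Heq.
pose c' : cell alpha := exist _ (Ordinal Hi, Ordinal lt_h'_max) le_h'_next.
(* Row h' is swapped by Omega_{0,h'} but not by Omega_{0,h}. *)
have := congr1 (fun U : filling alpha => U c) E.
rewrite !ffunE /= leqnn eqxx leqNgt lt_hh' /= (lookup_cell T c') /= => Tc.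
have c_neq : c != c'.
  by apply/eqP => /(congr1 (fun x : cell alpha => val (val x).1)) /=; apply: n_Sn.
have /forallP/(_ c')/implyP := nonattacking c.
by rewrite c_neq Tc eqxx /attack /= eqxx => /(_ isT).
Qed.

Lemma Pi_Omega (sigma : 'S_n) (T : filling alpha) (h : 'I_(al alpha i).+1) :
  T \in NAF alpha sigma ->
  Pi i T (Omega i h T) = (\prod_(r < h) rho i T r) * (1 - rho i T h).
Proof.
move=> /Omega_inj inj; rewrite /Pi; case: pickP => [h' /eqP /inj -> //|].
by move=> /(_ h); rewrite eqxx.
Qed.

Lemma Pi_eq0 (T U : filling alpha) :
  U \notin [set Omega i h T | h : 'I_(al alpha i).+1] -> Pi i T U = 0.
Proof.
move=> notOmega; rewrite /Pi; case: pickP => // h /eqP EU.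
by case/negP: notOmega; apply/imsetP; exists h.
Qed.

End SwapColumns.

Theorem proposition3p4 (n : nat) (alpha : n.-tuple nat) (sigma : 'S_n)
    (i : 'I_n) (Hi : (i.+1 < n)%N) (Heq : al alpha i = al alpha i.+1)
    (T : filling alpha) :
  T \in NAF alpha sigma ->
  \sum_(U in F alpha (tperm i (Ordinal Hi) * sigma)%g) Pi i T U = 1.
Proof.
move=> T_NAF.
have T_F : T \in F alpha sigma by move: T_NAF; rewrite inE => /andP [].
set S := [set Omega i h T | h : 'I_(al alpha i).+1].
have S_F : S \subset F alpha (tperm i (Ordinal Hi) * sigma)%g.
  by apply/subsetP => _ /imsetP [h _ ->]; apply: Omega_in_F.
rewrite (big_setID S) /= (setIidPr S_F) [X in _ + X]big1 ?addr0; last first.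
  by move=> U; rewrite inE => /andP [/Pi_eq0 ->].
rewrite big_imset /=; last by move=> h h' _ _; apply: (Omega_inj Hi Heq T_NAF).
rewrite (eq_bigr _ (fun h _ => Pi_Omega Hi Heq h T_NAF)) /=.
have rho_top : rho i T (al alpha i) = 0 by rewrite /rho ltnn.
by rewrite sum_prod_telescope big_ord_recr /= rho_top mulr0 subr0.
Qed.
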